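(* Consider Algorithm 3 (described in the context) under the Standing Assumption, Matrix Assumption and Gradient Assumption of the context. Let $\mathbb{P}_k$ denote probability conditioned on the algorithm having reached $x_k$ at iteration $k$. If there exists $p\in(0,1]$ such that for all $k\in\mathbb{N}$, $$\mathbb{P}_k\big[\bar g_k^T\bar d_k+\max\{\bar d_k^TH_k\bar d_k,0\}\ge g_k^Td_k+\max\{d_k^TH_kd_k,0\}\big]\ge p,$$ then the event $E_{\tau,big}$ occurs with probability zero, where $E_{\tau,big}$ is the event that there exist an infinite set $\overline{\mathcal K}_\tau\subseteq\mathbb{N}$ and $\bar\tau_{big}>0$ such that $\bar\tau_k=\bar\tau_{big}>\tau_k^{trial}$ and $\bar\xi_k=\bar\xi_{\min}$ for all $k\in\overline{\mathcal K}_\tau$.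
   Context: Problem: $\min_x f(x)$ s.t. $c(x)=0$, $f(x)=\mathbb{E}[F(x,\omega)]$, $c:\mathbb{R}^n\to\mathbb{R}^m$ deterministic. Notation: $g_k=\nabla f(x_k)$, $c_k=c(x_k)$, $J_k=\nabla c(x_k)^T$; $\Delta q(x,\tau,g,H,d)=-\tau(g^Td+\frac12\max\{d^THd,0\})+\|c(x)\|_1$. Standing Assumption: there is an open convex set $\mathcal X$ containing all iterates; $f$ is $C^1$ and bounded below on $\mathcal X$ with $\nabla f$ bounded and $L$-Lipschitz on $\mathcal X$; $c$ and $\nabla c^T$ bounded on $\mathcal X$; each $\nabla c_i$ is $\gamma_i$-Lipschitz on $\mathcal X$; singular values of $\nabla c(x)^T$ bounded away from zero uniformly over $\mathcal X$. $\Gamma:=\sum_i\gamma_i$. Matrix Assumption: deterministic symmetric $H_k$, chosen independently of the stochastic gradients, with $\|H_k\|_2\le\kappa_H$ and $u^TH_ku\ge\zeta\|u\|_2^2$ whenever $J_ku=0$. Algorithm 3 (inputs $x_0$, $\bar\tau_{-1}>0$, $\epsilon,\sigma\in(0,1)$, $\bar\xi_{-1}>0$, $\{\beta_k\}\subset(0,1]$, $\theta\ge0$): at iteration $k$, obtain stochastic gradient $\bar g_k$; $(\bar d_k,\bar y_k)$ solves $H_k\bar d_k+J_k^T\bar y_k=-\bar g_k$, $J_k\bar d_k=-c_k$ (assumed $\bar d_k\ne0$). $\bar\tau_k^{trial}=\infty$ if $\bar g_k^T\bar d_k+\max\{\bar d_k^TH_k\bar d_k,0\}\le0$, else $\frac{(1-\sigma)\|c_k\|_1}{\bar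 g_k^T\bar d_k+\max\{\bar d_k^TH_k\bar d_k,0\}}$; $\bar\tau_k=\bar\tau_{k-1}$ if $\bar\tau_{k-1}\le\bar\tau_k^{trial}$, else $(1-\epsilon)\bar\tau_k^{trial}$. $\bar\xi_k^{trial}=\frac{\Delta q(x_k,\bar\tau_k,\bar g_k,H_k,\bar d_k)}{\bar\tau_k\|\bar d_k\|_2^2}$; $\bar\xi_k=\bar\xi_{k-1}$ if $\bar\xi_{k-1}\le\bar\xi_k^{trial}$, else $(1-\epsilon)\bar\xi_k^{trial}$. With $D_k=(\bar\tau_kL+\Gamma)\|\bar d_k\|_2^2$, $\hat a_k=\beta_k\Delta q(x_k,\bar\tau_k,\bar g_k,H_k,\bar d_k)/D_k$, $\tilde a_k=\hat a_k-4\|c_k\|_1/D_k$, project both onto $[a_k,a_k+\theta\beta_k^2]$, $a_k=\frac{\beta_k\bar\xi_k\bar\tau_k}{\bar\tau_kL+\Gamma}$, giving $\widehat\alpha_k,\widetilde\alpha_k$; $\bar\alpha_k=\widehat\alpha_k$ if $\widehat\alpha_k<1$, $1$ if $\widetilde\alpha_k\le1\le\widehat\alpha_k$, $\widetilde\alpha_k$ if $\widetilde\alpha_k>1$; $x_{k+1}=x_k+\bar\alpha_k\bar d_k$. $\bar\xi_{\min}$ denotes the limit of the nonincreasing positive sequence $\{\bar\xi_k\}$. Gradient Assumption: $\mathbb{E}_k[\bar g_k]=g_k$, $\mathbb{E}_k[\|\bar g_k-g_k\|_2^2]\le M$, with $\mathbb{E}_k$ conditioned on reaching $x_k$ at iteration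 $k$. Deterministic counterparts: $(d_k,y_k)$ solves the same system with $g_k$ in place of $\bar g_k$; $\tau_k^{trial}=\infty$ if $g_k^Td_k+\max\{d_k^TH_kd_k,0\}\le0$, else $\frac{(1-\sigma)\|c_k\|_1}{g_k^Td_k+\max\{d_k^TH_kd_k,0\}}$. *)

From HB Require Import structures.
From mathcomp Require Import all_boot all_order all_algebra.
From mathcomp Require Import all_classical all_reals all_analysis.
Set Implicit Arguments. Unset Strict Implicit. Unset Printing Implicit Defensive.
Import Order.TTheory GRing.Theory Num.Theory numFieldNormedType.Exports.
Local Open Scope ring_scope.
Local Open Scope classical_set_scope.

Section LinAlg.
Context {R : realType}.

Definition norm2 {k : nat} (v : 'cV[R]_k) : R := Num.sqrt (\sum_i (v i 0) ^+ 2).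
Definition norm1 {k : nat} (v : 'cV[R]_k) : R := \sum_i `|v i 0|.
Definition sc {k : nat} (u v : 'cV[R]_k) : R := (u^T *m v) 0 0.

Definition opnorm_le {a b : nat} (A : 'M[R]_(a, b)) (K : R) : Prop :=
  forall v : 'cV[R]_b, norm2 (A *m v) <= K * norm2 v.

Definition curv {k : nat} (gv dv : 'cV[R]_k) (H : 'M[R]_k) : R :=
  sc gv dv + Num.max (sc dv (H *m dv)) 0.

Definition tau_trial {mm k : nat} (sigma : R) (cv : 'cV[R]_mm) (gv dv : 'cV[R]_k)
  (H : 'M[R]_k) : \bar R :=
  if curv gv dv H <= 0 then +oo%E
  else ((1 - sigma) * norm1 cv / curv gv dv H)%:E.

Definition tau_update (eps prev : R) (trial : \bar R) : R :=
  if (prev%:E <= trial)%E then prev else (1 - eps) * fine trial.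

(* Delta q(x, tau, g, H, d) with cv = c(x) *)
Definition Delta_q {mm k : nat} (cv : 'cV[R]_mm) (tau : R) (gv : 'cV[R]_k)
  (H : 'M[R]_k) (dv : 'cV[R]_k) : R :=
  - tau * (sc gv dv + 2^-1 * Num.max (sc dv (H *m dv)) 0) + norm1 cv.

Definition xi_trial {mm k : nat} (cv : 'cV[R]_mm) (tau : R) (gv : 'cV[R]_k)
  (H : 'M[R]_k) (dv : 'cV[R]_k) : R :=
  Delta_q cv tau gv H dv / (tau * norm2 dv ^+ 2).

Definition xi_update (eps prev trial : R) : R :=
  if prev <= trial then prev else (1 - eps) * trial.

Definition proj (lo hi v : R) : R := Num.min hi (Num.max lo v).

Definition step_size {mm k : nat} (L Gamma theta beta tau xi : R) (cv : 'cV[R]_mm)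
  (gv : 'cV[R]_k) (H : 'M[R]_k) (dv : 'cV[R]_k) : R :=
  let D := (tau * L + Gamma) * norm2 dv ^+ 2 in
  let ahat := beta * Delta_q cv tau gv H dv / D in
  let atil := ahat - 4 * norm1 cv / D in
  let a := beta * xi * tau / (tau * L + Gamma) in
  let alh := proj a (a + theta * beta ^+ 2) ahat in
  let alt := proj a (a + theta * beta ^+ 2) atil in
  if alh < 1 then alh else if alt <= 1 then 1 else alt.

End LinAlg.

Section Prob.
Context {R : realType} {d : measure_display} {T : measurableType d}.

Definition gen_sigma (F : set (T -> R)) : set (set T) :=
  <<s [set B | exists2 h, F h & exists2 A : set R, measurable A & B = h @^-1` A] >>.

Definition entries {a b : nat} (A : T -> 'M[R]_(a, b)) : set (T -> R) :=
  [set h | exists i j, h = fun w => A w i j].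

(* quantities known at the start of iteration k (once x_k is reached) *)
Definition alg3_state {n m : nat} (H : nat -> 'cV[R]_n -> 'M[R]_n)
  (gradf : 'cV[R]_n -> 'cV[R]_n) (c : 'cV[R]_n -> 'cV[R]_m)
  (J : 'cV[R]_n -> 'M[R]_(m, n)) (x : nat -> T -> 'cV[R]_n)
  (dd : nat -> T -> 'cV[R]_n) (y : nat -> T -> 'cV[R]_m) (k : nat) : set (T -> R) :=
  entries (x k) `|` entries (fun w => H k (x k w)) `|` entries (fun w => gradf (x k w))
  `|` entries (fun w => c (x k w)) `|` entries (fun w => J (x k w))
  `|` entries (dd k) `|` entries (y k).

(* quantities computed during iteration k (after drawing gbar_k) *)
Definition alg3_stoch {n m : nat} (gbar dbar : nat -> T -> 'cV[R]_n)
  (ybar : nat -> T -> 'cV[R]_m) (taubar xibar alpha : nat -> T -> R) (k : nat)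
  : set (T -> R) :=
  entries (gbar k) `|` entries (dbar k) `|` entries (ybar k)
  `|` [set taubar k] `|` [set xibar k] `|` [set alpha k].

Definition history_sigma (state stoch : nat -> set (T -> R)) (k : nat) : set (set T) :=
  gen_sigma (fun h => exists j, ((j <= k)%N /\ state j h) \/ ((j < k)%N /\ stoch j h)).

End Prob.

From HB Require Import structures.
From mathcomp Require Import all_boot all_order all_algebra.
From mathcomp Require Import all_classical all_reals all_analysis.
From mathcomp Require Import measurable_realfun lra.

Set Implicit Arguments.
Unset Strict Implicit.
Unset Printing Implicit Defensive.
Import Order.TTheory GRing.Theory Num.Theory numFieldNormedType.Exports.
Local Open Scope ring_scope.
Local Open Scope classical_set_scope.

(* On E_{tau,big} the merit parameter taubar_k is nonincreasing and equals
   taubar_big on an infinite set, hence it is eventually constant. At every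
   later k of that set the deterministic trial value lies below taubar_{k-1};
   had the stochastic curvature term gbar_k^T dbar_k + max{...} dominated the
   deterministic one, the stochastic trial value would lie below taubar_{k-1}
   too and taubar_k < taubar_{k-1}. So on E_{tau,big}, from some index on, the
   F_k-measurable event "tau_k^trial < taubar_{k-1}" occurs infinitely often
   and the F_{k+1}-measurable domination event fails each time. As domination
   has conditional probability at least p given F_k, the first N such
   opportunities after a fixed index all fail with probability at most
   (1 - p)^N, so this scenario is null. *)

Section MeritParameter.
Context {R : realType}.

Lemma norm1_ge0 k (v : 'cV[R]_k) : 0 <= norm1 v.
Proof. exact: sumr_ge0. Qed.

Lemma tau_trial_ge0 sigma mm k (cv : 'cV[R]_mm) (g dv : 'cV[R]_k) (Hm : 'M[R]_k) :
  sigma <= 1 -> (0 <= tau_trial sigma cv g dv Hm)%E.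
Proof.
move=> sigma1; rewrite /tau_trial; case: ifPn => [_|]; first exact: leey.
rewrite -ltNge => curv_gt0.
by rewrite lee_fin divr_ge0 ?(ltW curv_gt0) // mulr_ge0 ?norm1_ge0 ?subr_ge0.
Qed.

Lemma tau_trial_lt_fin sigma t mm k (cv : 'cV[R]_mm) (g dv : 'cV[R]_k) (Hm : 'M[R]_k) :
  (tau_trial sigma cv g dv Hm < t%:E)%E <->
  0 < curv g dv Hm /\ (1 - sigma) * norm1 cv < t * curv g dv Hm.
Proof.
rewrite /tau_trial; case: ifPn => [curv_le0|].
  by split => [|[]]; [rewrite ltNge leey | rewrite ltNge curv_le0].
by rewrite -ltNge => curv_gt0; rewrite lte_fin ltr_pdivrMr //; split => [|[]].
Qed.

Lemma tau_trial_le_curv sigma mm k (cv : 'cV[R]_mm) (g g' dv dv' : 'cV[R]_k)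
    (Hm Hm' : 'M[R]_k) :
  sigma <= 1 -> curv g dv Hm <= curv g' dv' Hm' ->
  (tau_trial sigma cv g' dv' Hm' <= tau_trial sigma cv g dv Hm)%E.
Proof.
move=> sigma1 le_curv; rewrite [X in (_ <= X)%E]/tau_trial.
case: ifPn => [_|]; first exact: leey.
rewrite -ltNge => curv_gt0; have curv'_gt0 := lt_le_trans curv_gt0 le_curv.
rewrite /tau_trial (lt_geF curv'_gt0) lee_fin.
by rewrite ler_wpM2l ?mulr_ge0 ?norm1_ge0 ?subr_ge0 // lef_pV2 ?posrE.
Qed.

Lemma tau_update_lt eps prev (trial : \bar R) :
  0 <= eps -> (0 <= trial)%E -> (trial < prev%:E)%E -> tau_update eps prev trial < prev.
Proof.
move=> eps_ge0 trial_ge0 trial_lt; rewrite /tau_update leNgt trial_lt /=.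
case: trial trial_ge0 trial_lt => [t||] //=; rewrite lee_fin lte_fin => t_ge0 t_lt.
nra.
Qed.

Lemma tau_update_le eps prev (trial : \bar R) :
  0 <= eps -> (0 <= trial)%E -> tau_update eps prev trial <= prev.
Proof.
move=> eps_ge0 trial_ge0; case: (leP prev%:E trial) => [le_trial|lt_trial].
  by rewrite /tau_update le_trial.
exact/ltW/tau_update_lt.
Qed.

End MeritParameter.

Lemma infinite_set_unbounded (K : set nat) n :
  infinite_set K -> exists2 k, K k & (n <= k)%N.
Proof.
move=> infK; have [k [Kk /negP]] := infinite_setN0 (infinite_setD infK (finite_II n)).
by rewrite -leqNgt; exists k.
Qed.

Lemma nonincreasing_eventually_const {disp} {T : porderType disp} (u : nat -> T)
    (K : set nat) (a : T) :
  (forall k, (u k.+1 <= u k)%O) -> infinite_set K -> (forall k, K k -> u k = a) ->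
  exists k0, forall k, (k0 <= k)%N -> u k = a.
Proof.
move=> /nonincreasing_seqP u_le infK uK; have [k0 Kk0] := infinite_setN0 infK.
exists k0 => k k0k; have [k1 Kk1 kk1] := infinite_set_unbounded k infK.
by apply/eqP; rewrite eq_le -{1}(uK _ Kk0) -(uK _ Kk1) !u_le.
Qed.

Lemma le_exprn_le0 {R : realType} (q r : R) :
  `|q| < 1 -> (forall N, r <= q ^+ N) -> r <= 0.
Proof.
move=> q_lt1 r_le; have q_cvg := cvg_expr q_lt1.
by rewrite -(cvg_lim _ q_cvg) //; apply: limr_ge; [exact: cvgP q_cvg | exact: nearW].
Qed.

Section MeasurableMatrixFun.
Context {R : realType} {d : measure_display} {T : measurableType d}.
Implicit Types f g : T -> R.

Lemma measurable_fun_sc k (u v : T -> 'cV[R]_k) :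
  (forall i, measurable_fun setT (fun w => u w i 0)) ->
  (forall i, measurable_fun setT (fun w => v w i 0)) ->
  measurable_fun setT (fun w => sc (u w) (v w)).
Proof.
move=> mu mv; rewrite /sc; under eq_fun do rewrite mxE.
apply: measurable_sum => i; under eq_fun do rewrite mxE.
exact: measurable_funM.
Qed.

Lemma measurable_fun_mulmx a b (A : T -> 'M[R]_(a, b)) (v : T -> 'cV[R]_b) :
  (forall i j, measurable_fun setT (fun w => A w i j)) ->
  (forall i, measurable_fun setT (fun w => v w i 0)) ->
  forall i, measurable_fun setT (fun w => (A w *m v w) i 0).
Proof.
move=> mA mv i; under eq_fun do rewrite mxE.
by apply: measurable_sum => j; exact: measurable_funM.
Qed.

Lemma measurable_fun_curv k (u v : T -> 'cV[R]_k) (A : T -> 'M[R]_k) :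
  (forall i, measurable_fun setT (fun w => u w i 0)) ->
  (forall i, measurable_fun setT (fun w => v w i 0)) ->
  (forall i j, measurable_fun setT (fun w => A w i j)) ->
  measurable_fun setT (fun w => curv (u w) (v w) (A w)).
Proof.
move=> mu mv mA; apply: measurable_funD; first exact: measurable_fun_sc.
apply: measurable_maxr => //; apply: measurable_fun_sc => //.
exact: measurable_fun_mulmx.
Qed.

Lemma measurable_fun_norm1 k (u : T -> 'cV[R]_k) :
  (forall i, measurable_fun setT (fun w => u w i 0)) ->
  measurable_fun setT (fun w => norm1 (u w)).
Proof.
by move=> mu; apply: measurable_sum => i; exact: measurableT_comp (mu i).
Qed.

Lemma measurable_ltr_set f g :
  measurable_fun setT f -> measurable_fun setT g -> measurable [set w | f w < g w].
Proof. by move=> mf mg; rewrite -[X in measurable X]setTI; exact: measurable_fun_ltr. Qed.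

Lemma measurable_ler_set f g :
  measurable_fun setT f -> measurable_fun setT g -> measurable [set w | f w <= g w].
Proof. by move=> mf mg; rewrite -[X in measurable X]setTI; exact: measurable_fun_ler. Qed.

End MeasurableMatrixFun.


Section RepeatedFailure.
Context {R : realType} {d : measure_display} {T : measurableType d}.
Variables (P : probability T R) (F : nat -> set (set T)) (A G : nat -> set T) (p : R).
Hypotheses (F_measurable : forall j, F j `<=` measurable)
  (FT : forall j, F j setT) (FI : forall j B C, F j B -> F j C -> F j (B `&` C))
  (FC : forall j B, F j B -> F j (~` B)) (F_nondecreasing : forall j, F j `<=` F j.+1)
  (A_adapted : forall j, F j (A j)) (G_adapted : forall j, F j.+1 (G j))
  (G_cond_ge : forall j B, F j B -> (p%:E * P B <= P (G j `&` B))%E)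
  (p_gt0 : 0 < p) (p_le1 : p <= 1).

Let Pr (X : set T) : R := fine (P X).

Let PrE X : measurable X -> P X = (Pr X)%:E.
Proof. by move=> mX; rewrite /Pr fineK ?fin_num_measure. Qed.

Let Pr_ge0 X : 0 <= Pr X.
Proof. by rewrite /Pr fine_ge0. Qed.

Let PrU X Y : measurable X -> measurable Y -> X `&` Y = set0 ->
  Pr (X `|` Y) = Pr X + Pr Y.
Proof. by move=> mX mY XY0; rewrite /Pr measureU // fineD ?fin_num_measure. Qed.

Let Pr_splitI X Y : measurable X -> measurable Y ->
  Pr X = Pr (X `&` ~` Y) + Pr (X `&` Y).
Proof.
move=> mX mY; rewrite /Pr (measureDI P mX mY) fineD ?fin_num_measure //.
  exact: measurableD.
exact: measurableI.
Qed.

Let mA j : measurable (A j). Proof. exact: F_measurable (A_adapted j). Qed.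

Let mG j : measurable (G j). Proof. exact: F_measurable (G_adapted j). Qed.

Lemma cond_failure_le j B : F j B -> Pr (B `&` ~` G j) <= (1 - p) * Pr B.
Proof.
move=> FB; have mB := F_measurable FB; have := G_cond_ge FB.
rewrite setIC (PrE mB) (PrE (measurableI _ _ mB (mG j))) lee_fin.
by rewrite (Pr_splitI mB (mG j)); nra.
Qed.

(* [first_failures L j N w]: among the times j, ..., j + L - 1 there are at
   least N at which A occurs, and G fails at the first N of them. *)
Fixpoint first_failures (L j N : nat) : set T :=
  match L, N with
  | _, 0 => setT
  | 0, _.+1 => set0
  | L.+1, N.+1 => (~` A j `&` first_failures L j.+1 N.+1)
                  `|` (A j `&` ~` G j `&` first_failures L j.+1 N)
  end.

Lemma measurable_first_failures L j N : measurable (first_failures L j N).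
Proof.
elim: L j N => [|L IH] j [|N] //=.
by apply: measurableU; apply: measurableI; rewrite ?IH //;
  [exact: measurableC | apply: measurableI => //; exact: measurableC].
Qed.

Lemma first_failures_le L j N B :
  F j B -> Pr (B `&` first_failures L j N) <= (1 - p) ^+ N * Pr B.
Proof.
elim: L j N B => [|L IH] j [|N] B FB /=; rewrite ?setIT ?expr0 ?mul1r //.
  by rewrite setI0 /Pr measure0 /= mulr_ge0 ?exprn_ge0 ?subr_ge0 ?fine_ge0.
have mB := F_measurable FB.
have FBA : F j.+1 (B `&` A j `&` ~` G j).
  by apply: FI; [exact/F_nondecreasing/FI | exact/FC].
have FBnA : F j.+1 (B `&` ~` A j) by exact/F_nondecreasing/FI/FC.
have q_ge0 : 0 <= 1 - p by rewrite subr_ge0.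
have qN_ge0 := exprn_ge0 N q_ge0.
(* On [A j] the first failure costs a factor [1 - p]; elsewhere restart at [j + 1]. *)
have := IH j.+1 N.+1 _ FBnA; have := IH j.+1 N _ FBA.
have := ler_wpM2l qN_ge0 (cond_failure_le (FI FB (A_adapted j))).
rewrite setIUr PrU; first last.
- rewrite -subset0 => w [[_ [nAw _]] [_ [[Aw _] _]]]; exact: nAw.
- by apply: measurableI => //; apply: measurableI;
    [apply: measurableI => //; exact: measurableC | exact: measurable_first_failures].
- by apply: measurableI => //; apply: measurableI;
    [exact: measurableC | exact: measurable_first_failures].
rewrite !setIA (Pr_splitI mB (mA j)) !exprS; lra.
Qed.

Lemma first_failures_nondecreasing L j N :
  first_failures L j N `<=` first_failures L.+1 j N.
Proof.
elim: L j N => [|L IH] j [|N] // w [[nAw Fw]|[AGw Fw]].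
- by left; split => //; exact: IH.
- by right; split => //; exact: IH.
Qed.

Lemma first_failures_exhaust w j N :
  (forall k, (j <= k)%N -> A k w -> ~ G k w) ->
  (forall k, exists2 k', (k <= k')%N & A k' w) ->
  exists L, first_failures L j N w.
Proof.
move=> + Aio; elim: N j => [|N IHN] j fails; first by exists 0%N.
have at_A j' : (forall k, (j' <= k)%N -> A k w -> ~ G k w) -> A j' w ->
    exists L, first_failures L j' N.+1 w.
  move=> fails' Aj'; have [L FL] := IHN j'.+1 (fun k jk => fails' k (ltnW jk)).
  by exists L.+1; right; split => //; split => //; exact: fails'.
suff from_dist e j' : (forall k, (j' <= k)%N -> A k w -> ~ G k w) ->
    A (j' + e)%N w -> exists L, first_failures L j' N.+1 w.
  by have [k jk Ak] := Aio j; apply: (from_dist (k - j)%N j fails); rewrite subnKC.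
elim: e j' => [|e IHe] j' fails' Ae; first by rewrite addn0 in Ae; exact: at_A.
have [Aj'|nAj'] := pselect (A j' w); first exact: at_A.
have [|L FL] := IHe j'.+1 (fun k jk => fails' k (ltnW jk)); first by rewrite addSnnS.
by exists L.+1; left.
Qed.

Lemma bigcup_first_failures_le j N :
  (P (\bigcup_L first_failures L j N) <= ((1 - p) ^+ N)%:E)%E.
Proof.
have W_nd : nondecreasing_seq (fun L => first_failures L j N).
  by apply/nondecreasing_seqP => L; apply/subsetPset; exact: first_failures_nondecreasing.
have U_cvg := nondecreasing_cvg_mu (mu := P) (fun L => measurable_first_failures L j N)
  (bigcupT_measurable _ (fun L => measurable_first_failures L j N)) W_nd.
rewrite -(cvg_lim _ U_cvg) //; apply: lime_le; first exact: cvgP U_cvg.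
apply: nearW => L /=; rewrite (PrE (measurable_first_failures _ _ _)) lee_fin.
by have := first_failures_le L N (FT j); rewrite setTI /Pr probability_setT mulr1.
Qed.

Lemma failures_from_negligible j :
  P.-negligible [set w | (forall k, (j <= k)%N -> A k w -> ~ G k w) /\
                         (forall k, exists2 k', (k <= k')%N & A k' w)].
Proof.
pose Z := \bigcap_N \bigcup_L first_failures L j N.
have mU N : measurable (\bigcup_L first_failures L j N).
  by apply: bigcupT_measurable => L; exact: measurable_first_failures.
have mZ : measurable Z by exact: bigcapT_measurable.
exists Z; split => //; last first.
  by move=> w [fails Aio] N _; have [L FL] := first_failures_exhaust N fails Aio; exists L.
rewrite (PrE mZ); congr (_%:E); apply/eqP; rewrite eq_le Pr_ge0 andbT.
apply: (@le_exprn_le0 _ (1 - p)) => [|N].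
  by rewrite ger0_norm ?subr_ge0 // gtrBl.
rewrite -lee_fin -PrE //; apply: le_trans (bigcup_first_failures_le j N).
by apply: le_measure; rewrite ?inE // => w; apply.
Qed.

Lemma eventually_failing_negligible :
  P.-negligible [set w | exists j, (forall k, (j <= k)%N -> A k w -> ~ G k w) /\
                         (forall k, exists2 k', (k <= k')%N & A k' w)].
Proof.
apply: (negligibleS _ (negligible_bigcup failures_from_negligible)).
by move=> w [j fails]; exists j.
Qed.

End RepeatedFailure.

Section History.
Context {R : realType} {d : measure_display} {T : measurableType d}.

Definition preimage_gens (F : set (T -> R)) : set (set T) :=
  [set B | exists2 h, F h & exists2 A : set R, measurable A & B = h @^-1` A].

Definition history_family (state stoch : nat -> set (T -> R)) (k : nat) : set (T -> R) :=
  fun h => exists j, ((j <= k)%N /\ state j h) \/ ((j < k)%N /\ stoch j h).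

Lemma preimage_gens_measurable_fun (F : set (T -> R)) h :
  F h -> measurable_fun [set: g_sigma_algebraType (preimage_gens F)] h.
Proof.
by move=> Fh _ A mA; rewrite setTI; apply: sub_sigma_algebra; exists h => //; exists A.
Qed.

Variables (state stoch : nat -> set (T -> R)).

Lemma history_state_measurable k j h :
  (j <= k)%N -> state j h ->
  measurable_fun [set: g_sigma_algebraType (preimage_gens (history_family state stoch k))] h.
Proof. by move=> jk sh; apply: preimage_gens_measurable_fun; exists j; left. Qed.

Lemma history_stoch_measurable k j h :
  (j < k)%N -> stoch j h ->
  measurable_fun [set: g_sigma_algebraType (preimage_gens (history_family state stoch k))] h.
Proof. by move=> jk sh; apply: preimage_gens_measurable_fun; exists j; right. Qed.

Lemma history_sigma_measurable :
  (forall j h, state j h \/ stoch j h -> measurable_fun setT h) ->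
  forall k, history_sigma state stoch k `<=` measurable.
Proof.
move=> mgens k; apply: smallest_sub; first exact: sigma_algebra_measurable.
move=> _ [h [j hj] [A mA ->]]; rewrite -(setTI (h @^-1` A)).
by apply: (mgens j) => //; case: hj => -[_ sh]; [left | right].
Qed.

Lemma history_sigma_nondecreasing k :
  history_sigma state stoch k `<=` history_sigma state stoch k.+1.
Proof.
apply: sub_sigma_algebra2 => B [h [j hj] genB]; exists h => //; exists j.
by case: hj => -[jk sh]; [left | right]; split => //; exact: leqW.
Qed.

End History.

(* [history_sigma state stoch k] is convertible to the measurable sets of this type. *)
Local Notation history_type state stoch k :=
  (g_sigma_algebraType (preimage_gens (history_family state stoch k))).

Section Algorithm3.
Context {R : realType} {dO : measure_display} {Omega : measurableType dO} {n m : nat}.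
Variables (H : nat -> 'cV[R]_n -> 'M[R]_n) (gradf : 'cV[R]_n -> 'cV[R]_n)
  (c : 'cV[R]_n -> 'cV[R]_m) (J : 'cV[R]_n -> 'M[R]_(m, n))
  (x d gbar dbar : nat -> Omega -> 'cV[R]_n) (y ybar : nat -> Omega -> 'cV[R]_m)
  (taubar xibar alpha : nat -> Omega -> R) (tau_init sigma eps : R).

Local Notation state := (alg3_state H gradf c J x d y).
Local Notation stoch := (alg3_stoch gbar dbar ybar taubar xibar alpha).
Local Notation Hist k := (history_type state stoch k).

Definition prev_tau k w : R := if k is k'.+1 then taubar k' w else tau_init.

Definition det_tau_trial k w : \bar R :=
  tau_trial sigma (c (x k w)) (gradf (x k w)) (d k w) (H k (x k w)).

Definition stoch_tau_trial k w : \bar R :=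
  tau_trial sigma (c (x k w)) (gbar k w) (dbar k w) (H k (x k w)).

Definition det_trial_below_prev k : set Omega :=
  [set w | (det_tau_trial k w < (prev_tau k w)%:E)%E].

Definition stoch_curv_ge k : set Omega :=
  [set w | curv (gradf (x k w)) (d k w) (H k (x k w))
           <= curv (gbar k w) (dbar k w) (H k (x k w))].

Let det_curv_measurable k j : (j <= k)%N ->
  measurable_fun [set: Hist k] (fun w => curv (gradf (x j w)) (d j w) (H j (x j w))).
Proof.
(* [do l left; right] selects the block of the union [alg3_state] (or
   [alg3_stoch]) that lists the entries of the required quantity. *)
move=> jk; apply: measurable_fun_curv => [i|i|i i'];
  apply: history_state_measurable jk _.
- by do 4 left; right; exists i, 0.
- by left; right; exists i, 0.
- by do 5 left; right; exists i, i'.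
Qed.

Lemma det_trial_below_prev_history k :
  history_sigma state stoch k (det_trial_below_prev k).
Proof.
have -> : det_trial_below_prev k =
    [set w | 0 < curv (gradf (x k w)) (d k w) (H k (x k w))] `&`
    [set w | (1 - sigma) * norm1 (c (x k w))
             < prev_tau k w * curv (gradf (x k w)) (d k w) (H k (x k w))].
  by apply/seteqP; split => w /tau_trial_lt_fin.
apply: (@measurableI _ (Hist k)); apply: measurable_ltr_set => //.
- exact: det_curv_measurable.
- apply: measurable_funM => //; apply: measurable_fun_norm1 => i.
  by apply: history_state_measurable (leqnn k) _; do 3 left; right; exists i, 0.
- apply: measurable_funM; last exact: det_curv_measurable.
  case: k => [|k] /=; first exact: measurable_cst.
  by apply: history_stoch_measurable (ltnSn k) _; do 2 left; right.
Qed.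

Lemma stoch_curv_ge_history k : history_sigma state stoch k.+1 (stoch_curv_ge k).
Proof.
apply: (@measurable_ler_set _ _ (Hist k.+1)); first exact: det_curv_measurable.
apply: measurable_fun_curv => [i|i|i i'].
- by apply: history_stoch_measurable (ltnSn k) _; do 5 left; exists i, 0.
- by apply: history_stoch_measurable (ltnSn k) _; do 4 left; right; exists i, 0.
- by apply: history_state_measurable (leqnSn k) _; do 5 left; right; exists i, i'.
Qed.

Hypotheses (eps_ge0 : 0 <= eps) (sigma_le1 : sigma <= 1)
  (taubar_update : forall k w,
     taubar k w = tau_update eps (prev_tau k w) (stoch_tau_trial k w)).

Lemma taubar_nonincreasing w k : taubar k.+1 w <= taubar k w.
Proof. by rewrite taubar_update; exact/tau_update_le/tau_trial_ge0. Qed.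

Lemma taubar_lt_prev k w :
  det_trial_below_prev k w -> stoch_curv_ge k w -> taubar k w < prev_tau k w.
Proof.
move=> det_lt curv_ge; rewrite taubar_update.
apply: tau_update_lt => //; first exact: tau_trial_ge0.
exact: le_lt_trans (tau_trial_le_curv _ sigma_le1 curv_ge) det_lt.
Qed.

Lemma tau_big_eventually_failing w (K : set nat) tb :
  infinite_set K -> (forall k, K k -> taubar k w = tb /\ (det_tau_trial k w < tb%:E)%E) ->
  exists j, (forall k, (j <= k)%N -> det_trial_below_prev k w -> ~ stoch_curv_ge k w) /\
            (forall k, exists2 k', (k <= k')%N & det_trial_below_prev k' w).
Proof.
move=> infK tbK.
have [j tb_from] := nonincreasing_eventually_const (taubar_nonincreasing w) infK
  (fun k Kk => (tbK k Kk).1).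
have prev_tb k : (j < k)%N -> prev_tau k w = tb by case: k => // k /tb_from.
exists j.+1; split => [k jk below curv_ge|k].
  by have := taubar_lt_prev below curv_ge; rewrite prev_tb // tb_from ?ltxx // ltnW.
have [k' Kk' k'_ge] := infinite_set_unbounded (maxn k j.+1) infK.
rewrite geq_max in k'_ge; case/andP: k'_ge => kk' jk'.
by exists k' => //; rewrite /det_trial_below_prev /= prev_tb //; exact: (tbK k' Kk').2.
Qed.

End Algorithm3.

Theorem proposition3p15
  (R : realType) (dO : measure_display) (Omega : measurableType dO)
  (P : probability Omega R) (n m : nat)
  (f : 'cV[R]_n -> R) (gradf : 'cV[R]_n -> 'cV[R]_n)
  (c : 'cV[R]_n -> 'cV[R]_m) (J : 'cV[R]_n -> 'M[R]_(m, n))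
  (X : set 'cV[R]_n) (L : R) (gam : 'I_m -> R)
  (H : nat -> 'cV[R]_n -> 'M[R]_n) (kappaH zeta M : R)
  (x0 : 'cV[R]_n) (tau_init eps sigma xi_init theta : R) (beta : nat -> R)
  (gbar : nat -> Omega -> 'cV[R]_n) (x dbar d : nat -> Omega -> 'cV[R]_n)
  (ybar y : nat -> Omega -> 'cV[R]_m) (taubar xibar alpha : nat -> Omega -> R)
  (p : R) :
  (* ---- Standing Assumption ---- *)
  open X -> convex_set X -> (forall k w, X (x k w)) ->
  (forall v, X v -> differentiable f v /\ forall u, 'D_u f v = sc (gradf v) u) ->
  {within X, continuous gradf} ->
  (exists flow : R, forall v, X v -> flow <= f v) ->
  (exists kg : R, forall v, X v -> norm2 (gradf v) <= kg) ->
  (forall v v', X v -> X v' -> norm2 (gradf v - gradf v') <= L * norm2 (v - v')) ->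
  (forall v, X v -> differentiable c v /\ forall u, 'D_u c v = J v *m u) ->
  {within X, continuous J} ->
  (exists kc : R, forall v, X v -> norm2 (c v) <= kc) ->
  (exists kJ : R, forall v, X v -> opnorm_le (J v) kJ) ->
  (forall i v v', X v -> X v' ->
     norm2 ((row i (J v))^T - (row i (J v'))^T) <= gam i * norm2 (v - v')) ->
  (exists2 smin : R, 0 < smin &
     forall v, X v -> forall u : 'cV[R]_m, smin * norm2 u <= norm2 ((J v)^T *m u)) ->
  (* ---- Matrix Assumption ---- *)
  0 < zeta ->
  (forall k w, (H k (x k w))^T = H k (x k w) /\ opnorm_le (H k (x k w)) kappaH /\
     forall u, J (x k w) *m u = 0 -> zeta * norm2 u ^+ 2 <= sc u (H k (x k w) *m u)) ->
  (* ---- Algorithm 3: inputs ---- *)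
  0 < tau_init -> 0 < eps < 1 -> 0 < sigma < 1 -> 0 < xi_init ->
  (forall k, 0 < beta k <= 1) -> 0 <= theta ->
  (* ---- Algorithm 3: iterations (pathwise, for every outcome w) ---- *)
  (forall w, x 0%N w = x0) ->
  (forall k w, H k (x k w) *m dbar k w + (J (x k w))^T *m ybar k w = - gbar k w /\
               J (x k w) *m dbar k w = - c (x k w)) ->
  (forall k w, dbar k w != 0) ->
  (forall k w, taubar k w =
     tau_update eps (if k is k'.+1 then taubar k' w else tau_init)
       (tau_trial sigma (c (x k w)) (gbar k w) (dbar k w) (H k (x k w)))) ->
  (forall k w, xibar k w =
     xi_update eps (if k is k'.+1 then xibar k' w else xi_init)
       (xi_trial (c (x k w)) (taubar k w) (gbar k w) (H k (x k w)) (dbar k w))) ->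
  (forall k w, alpha k w =
     step_size L (\sum_i gam i) theta (beta k) (taubar k w) (xibar k w)
       (c (x k w)) (gbar k w) (H k (x k w)) (dbar k w)) ->
  (forall k w, x k.+1 w = x k w + alpha k w *: dbar k w) ->
  (* deterministic counterparts *)
  (forall k w, H k (x k w) *m d k w + (J (x k w))^T *m y k w = - gradf (x k w) /\
               J (x k w) *m d k w = - c (x k w)) ->
  (* all quantities produced by the algorithm are random variables *)
  (forall k h, alg3_state H gradf c J x d y k h \/
               alg3_stoch gbar dbar ybar taubar xibar alpha k h ->
     measurable_fun setT h) ->
  (* ---- Gradient Assumption (conditioning on F_k = history up to x_k) ---- *)
  (forall k B, history_sigma (alg3_state H gradf c J x d y)
                 (alg3_stoch gbar dbar ybar taubar xibar alpha) k B ->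
     forall i, (\int[P]_(w in B) (gbar k w i 0)%:E =
                \int[P]_(w in B) (gradf (x k w) i 0)%:E)%E) ->
  (forall k B, history_sigma (alg3_state H gradf c J x d y)
                 (alg3_stoch gbar dbar ybar taubar xibar alpha) k B ->
     (\int[P]_(w in B) ((norm2 (gbar k w - gradf (x k w))) ^+ 2)%:E <= M%:E * P B)%E) ->
  (* ---- hypothesis of the proposition: P_k[...] >= p for all k ---- *)
  0 < p <= 1 ->
  (forall k B, history_sigma (alg3_state H gradf c J x d y)
                 (alg3_stoch gbar dbar ybar taubar xibar alpha) k B ->
     (p%:E * P B <=
      P ([set w | (curv (gradf (x k w)) (d k w) (H k (x k w))
                  <= curv (gbar k w) (dbar k w) (H k (x k w)))%R] `&` B))%E) ->
  (* ---- conclusion: E_{tau,big} has probability zero ---- *)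
  P.-negligible
    [set w | exists K : set nat, infinite_set K /\
       exists2 taubig : R, 0 < taubig &
         forall k, K k ->
           [/\ taubar k w = taubig,
               (tau_trial sigma (c (x k w)) (gradf (x k w)) (d k w) (H k (x k w))
                 < taubig%:E)%E
             & xibar j w @[j --> \oo] --> xibar k w]].
Proof.
move=> _ _ _ _ _ _ _ _ _ _ _ _ _ _ _ _ _ /andP[eps_gt0 _] /andP[_ sigma_lt1] _ _ _ _ _ _
  taubar_update _ _ _ _ alg3_measurable _ _ /andP[p_gt0 p_le1] curv_ge_cond.
pose Hist k := history_type (alg3_state H gradf c J x d y)
  (alg3_stoch gbar dbar ybar taubar xibar alpha) k.
apply: (negligibleS _ (eventually_failing_negligible
  (history_sigma_measurable alg3_measurable)
  (fun k => @measurableT _ (Hist k)) (fun k => @measurableI _ (Hist k))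
  (fun k => @measurableC _ (Hist k)) (@history_sigma_nondecreasing _ _ _ _ _)
  (fun k => det_trial_below_prev_history tau_init sigma (k := k))
  (fun k => stoch_curv_ge_history (k := k)) curv_ge_cond p_gt0 p_le1)).
move=> w [K [infK [tb _ tbK]]].
apply: (tau_big_eventually_failing (tb := tb) (ltW eps_gt0) (ltW sigma_lt1)
  taubar_update infK).
by move=> k /tbK[-> trial_lt _].
Qed.
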